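(* Let $n\ge 1$, let $X\in\mathbb{R}^{n\times n}$ be a symmetric positive definite matrix, let $\Delta T>0$, and for each $i\in\{1,\dots,n\}$ let $\underline{v}_i\le \bar{v}_i$ be real numbers. Consider the closed-loop discrete-time voltage dynamics $$\mathbf{v}(t+1)=\mathbf{v}(t)+\Delta T\, X\,\mathbf{u}(t),\qquad u_i(t)=-g_i(v_i(t)),\quad i=1,\dots,n,\; t=0,1,2,\dots,$$ where each $g_i:\mathbb{R}\to\mathbb{R}$ is continuously differentiable and satisfies $g_i(v_i)=0$ for all $v_i\in[\underline{v}_i,\bar{v}_i]$. Let $\frac{\partial \mathbf{u}}{\partial \mathbf{v}}=-\mathrm{diag}\big(g_1'(v_1),\dots,g_n'(v_n)\big)$. Suppose that, for $v_i$ in $(-\infty,\underline{v}_i]$ and in $[\bar{v}_i,\infty)$ (for each $i$), the derivatives satisfy the matrix inequality $$-\frac{2}{\Delta T}X^{-1}\prec \frac{\partial \mathbf{u}}{\partial \mathbf{v}}\prec 0,$$ and that $\lim_{|v_i|\to\infty}|g_i(v_i)|=\infty$ for every $i$. Then the closed-loop system is voltage stable: for every initial condition $\mathbf{v}(0)\in\mathbb{R}^n$ (and every uncontrollable component $\mathbf{v}^{env}$ of the voltage), $\lim_{t\to\infty}\mathrm{dist}(\mathbf{v}(t),S_v)=0$, where $S_v=\{\mathbf{v}\in\mathbb{R}^n:\underline{v}_i\le v_i\le \bar{v}_i\ \forall i\}$ and $\mathrm{dist}(\mathbf{v},S_v)=\min_{\mathbf{v}'\in S_v}\|\mathbf{v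}-\mathbf{v}'\|$.
   Context: This models voltage control in a (single-phase or three-phase) radial distribution network under the linearized branch flow model $\mathbf{v}=X\mathbf{q}+\mathbf{v}^{env}$, where $\mathbf{v}$ is the vector of squared voltage magnitudes, $\mathbf{q}$ the reactive power injections, $X$ the (positive definite) reactance-based sensitivity matrix, and $\mathbf{v}^{env}$ the uncontrollable part determined by active power injections and the substation voltage. The control $u_i$ is the change of reactive power injection at bus $i$ per step, $q_i(t+1)=q_i(t)+u_i(t)$, computed in a decentralized way from the local voltage $v_i$ only; $\Delta T$ is the sampling time (zero-order hold discretization of $\dot{\mathbf{v}}=X\mathbf{u}$). For symmetric matrices, $A\prec B$ means $B-A$ is positive definite. *)

From HB Require Import structures.
From mathcomp Require Import all_boot all_order all_algebra.
From mathcomp Require Import all_classical all_reals all_analysis.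
Set Implicit Arguments. Unset Strict Implicit. Unset Printing Implicit Defensive.
Import Order.TTheory GRing.Theory Num.Theory.
Import numFieldNormedType.Exports.
Local Open Scope ring_scope.
Local Open Scope classical_set_scope.

Definition posdef {R : realType} {n : nat} (A : 'M[R]_n) : Prop :=
  A^T = A /\ forall x : 'cV[R]_n, x != 0 -> 0 < (x^T *m A *m x) ord0 ord0.

Definition loewner_lt {R : realType} {n : nat} (A B : 'M[R]_n) : Prop :=
  posdef (B - A).

Definition C1 {R : realType} (g : R -> R) : Prop :=
  (forall x : R, derivable g x 1) /\ continuous (g^`()).

Definition enorm {R : realType} {n : nat} (v : 'cV[R]_n) : R :=
  Num.sqrt (\sum_i (v i ord0) ^+ 2).

Definition Sv {R : realType} {n : nat} (vlo vhi : 'I_n -> R) : set 'cV[R]_n :=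
  [set w | forall i, vlo i <= w i ord0 <= vhi i].

(* dist(v, S_v) = min_{v' in S_v} ||v - v'|| (written as the infimum; the
   minimum is attained since S_v is closed and nonempty). *)
Definition dist_Sv {R : realType} {n : nat} (vlo vhi : 'I_n -> R)
  (v : 'cV[R]_n) : R :=
  inf [set enorm (v - w) | w in Sv vlo vhi].

Definition ctrl {R : realType} {n : nat} (g : 'I_n -> R -> R)
  (v : 'cV[R]_n) : 'cV[R]_n := \col_i (- g i (v i ord0)).

Definition dudv {R : realType} {n : nat} (g : 'I_n -> R -> R)
  (v : 'cV[R]_n) : 'M[R]_n :=
  - diag_mx (\row_i ((g i)^`() (v i ord0))).

(* V(v) = (v - v_lo)^T X^-1 (v - v_lo) is a Lyapunov function: one step of
   the dynamics lowers it by
     F(v) = 2 dT g(v)^T (v - v_lo) - dT^2 g(v)^T X g(v).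
   By the mean value theorem g_i(v_i) = g_i'(eta_i) (v_i - p_i), where p_i is the
   projection of v_i onto [v_lo_i, v_hi_i] and eta_i lies outside that interval.
   Completing the square coordinatewise with y = (dT/2) X g(v) gives
     F(v) >= 2 dT y^T ((2/dT) X^-1 - diag g'(eta)) y,
   so the Loewner bounds at eta make F nonnegative, and positive off S_v.
   Hence V is nonincreasing, the trajectory stays in a fixed box, and
   F(v(t)) = V(v(t)) - V(v(t+1)) tends to 0.  On every compact box of points lying
   eps outside S_v in a given coordinate, F has a positive minimum, so the
   trajectory eventually avoids all these boxes, i.e. gets eps-close to S_v. *)

From HB Require Import structures.
From mathcomp Require Import all_boot all_order all_algebra.
From mathcomp Require Import all_classical all_reals all_analysis.
From mathcomp Require Import ring lra.
Import Order.TTheory GRing.Theory Num.Theory.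
Import numFieldNormedType.Exports.
Local Open Scope ring_scope.
Local Open Scope classical_set_scope.

Section QuadraticForms.
Context {R : realType} {n : nat}.
Implicit Types (a b e y z G : 'cV[R]_n) (d : 'rV[R]_n) (c : R) (A X : 'M[R]_n).

Lemma dot_sum a b : (a^T *m b) ord0 ord0 = \sum_i a i ord0 * b i ord0.
Proof. by rewrite !mxE; apply: eq_bigr => i _; rewrite mxE. Qed.

Lemma dotC a b : (a^T *m b) ord0 ord0 = (b^T *m a) ord0 ord0.
Proof. by rewrite !dot_sum; apply: eq_bigr => i _; rewrite mulrC. Qed.

Lemma quad_sum A a b : (a^T *m A *m b) ord0 ord0 =
  \sum_i \sum_j a i ord0 * A i j * b j ord0.
Proof.
rewrite -mulmxA dot_sum; apply: eq_bigr => i _; rewrite mxE big_distrr /=.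
by apply: eq_bigr => j _; rewrite mulrA.
Qed.

Lemma quad_diag_mx d y :
  (y^T *m diag_mx d *m y) ord0 ord0 = \sum_i d ord0 i * y i ord0 ^+ 2.
Proof.
rewrite quad_sum; apply: eq_bigr => i _.
rewrite (bigD1 i) //= big1 ?addr0 => [|j /negbTE ji]; last first.
  by rewrite mxE eq_sym ji mulr0n mulr0 mul0r.
by rewrite mxE eqxx mulr1n expr2 mulrCA mulrA.
Qed.

Lemma dot_delta z i : ((delta_mx i ord0 : 'cV[R]_n)^T *m z) ord0 ord0 = z i ord0.
Proof.
rewrite dot_sum (bigD1 i) //= big1 ?addr0; first by rewrite !mxE !eqxx mul1r.
by move=> k ki; rewrite !mxE (negbTE ki) mul0r.
Qed.

Lemma quad_delta A i :
  ((delta_mx i ord0 : 'cV[R]_n)^T *m A *m (delta_mx i ord0 : 'cV[R]_n)) ord0 ord0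
  = A i i.
Proof.
rewrite -mulmxA dot_delta !mxE (bigD1 i) //= big1 ?addr0 => [|j /negbTE ji].
  by rewrite !mxE eqxx mulr1.
by rewrite !mxE ji mulr0.
Qed.

Lemma delta_cV_neq0 i : (delta_mx i ord0 : 'cV[R]_n) != 0.
Proof.
apply/negP => /eqP /matrixP /(_ i ord0).
by rewrite !mxE !eqxx => /eqP; rewrite oner_eq0.
Qed.

Lemma posdef_diag_gt0 {A} i : posdef A -> 0 < A i i.
Proof. by move=> [_ hA]; rewrite -quad_delta; apply/hA/delta_cV_neq0. Qed.

Lemma posdef_quad_ge0 {A} y : posdef A -> 0 <= (y^T *m A *m y) ord0 ord0.
Proof.
move=> [_ hA]; have [->|y0] := eqVneq y 0; first by rewrite mulmx0 mxE.
exact/ltW/hA.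
Qed.

Lemma posdef_unitmx {X} : posdef X -> X \in unitmx.
Proof.
move=> [hX hp]; rewrite unitmxE unitfE; apply/negP => /det0P [r r0 rX].
have := hp r^T; rewrite trmx_eq0 trmxK -mulmxA => /(_ r0).
suff -> : X *m r^T = 0 by rewrite mulmx0 mxE ltxx.
by rewrite -[X]hX -trmx_mul rX linear0.
Qed.

Lemma posdef_invmx {X} : posdef X -> posdef (invmx X).
Proof.
move=> hX; have uX := posdef_unitmx hX.
have sym : (invmx X)^T = invmx X by rewrite trmx_inv hX.1.
split=> // z z0.
have -> : z^T *m invmx X *m z = (invmx X *m z)^T *m X *m (invmx X *m z).
  by rewrite trmx_mul sym -!mulmxA (mulmxA X) mulmxV // mul1mx.
apply: hX.2; apply: contra z0 => /eqP h.
by rewrite -[z]mul1mx -(mulmxV uX) -mulmxA h mulmx0.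
Qed.

Lemma quad_invmx_sub {X} e G c : posdef X ->
  ((e - c *: (X *m G))^T *m invmx X *m (e - c *: (X *m G))) ord0 ord0 =
  (e^T *m invmx X *m e) ord0 ord0 - 2 * c * (G^T *m e) ord0 ord0
   + c ^+ 2 * (G^T *m X *m G) ord0 ord0.
Proof.
move=> hX; have uX := posdef_unitmx hX.
have -> : (e - c *: (X *m G))^T = e^T - c *: (G^T *m X).
  by rewrite raddfB /= linearZ /= trmx_mul hX.1.
rewrite !(mulmxBl, mulmxBr) -!scalemxAl -!scalemxAr -!mulmxA.
rewrite !(mulmxA X (invmx X)) (mulmxA (invmx X) X) (mulmxV uX) (mulVmx uX) !mul1mx.
have -> : e^T *m G = G^T *m e by apply/matrixP => i j; rewrite !ord1 dotC.
by rewrite !mxE; ring.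
Qed.

Lemma sqr_coord_le_quad_invmx {X} z i : posdef X ->
  z i ord0 ^+ 2 <= X i i * (z^T *m invmx X *m z) ord0 ord0.
Proof.
move=> hX; have Xii := posdef_diag_gt0 i hX.
have := posdef_quad_ge0 (z - (z i ord0 / X i i) *: (X *m delta_mx i ord0))
  (posdef_invmx hX).
rewrite quad_invmx_sub // dot_delta quad_delta => h.
set N := (z^T *m invmx X *m z) ord0 ord0 in h *; rewrite -subr_ge0.
suff -> : X i i * N - z i ord0 ^+ 2 = X i i * (N - 2 * (z i ord0 / X i i) * z i ord0
                                     + (z i ord0 / X i i) ^+ 2 * X i i).
  exact: mulr_ge0 (ltW Xii) h.
by field; rewrite gt_eqF.
Qed.

Lemma quad_gap_le_decrement {X} G e d c : posdef X -> 0 < c ->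
  (forall i (r : R), 2 * G i ord0 * r - d ord0 i * r ^+ 2 <= G i ord0 * e i ord0) ->
  2 * c * (((c / 2) *: (X *m G))^T *m ((2 / c) *: invmx X - diag_mx d)
            *m ((c / 2) *: (X *m G))) ord0 ord0
  <= 2 * c * (G^T *m e) ord0 ord0 - c ^+ 2 * (G^T *m X *m G) ord0 ord0.
Proof.
move=> hX c0 hcoord; have uX := posdef_unitmx hX.
set y := (c / 2) *: (X *m G); set P := (G^T *m X *m G) ord0 ord0.
set S := \sum_i d ord0 i * y i ord0 ^+ 2.
have yT : y^T = (c / 2) *: (G^T *m X) by rewrite linearZ /= trmx_mul hX.1.
have quad_y : (y^T *m ((2 / c) *: invmx X - diag_mx d) *m y) ord0 ord0 = c / 2 * P - S.
  rewrite mulmxBr mulmxBl mxE [X in _ + X]mxE quad_diag_mx -/S.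
  rewrite -!scalemxAr -!scalemxAl mxE.
  rewrite yT -!scalemxAl (mulmxK uX) mulmxA scalerA mxE -/P.
  by field; rewrite gt_eqF.
have cross : c * P - S <= (G^T *m e) ord0 ord0.
  have -> : c * P = \sum_i 2 * G i ord0 * y i ord0.
    under eq_bigr do rewrite -mulrA.
    rewrite -mulr_sumr -dot_sum /y -scalemxAr mulmxA mxE -/P.
    by field.
  rewrite -sumrB dot_sum; exact: ler_sum.
rewrite quad_y; nra.
Qed.
End QuadraticForms.

Section DeadZone.
Context {R : realType}.
Variables (lo hi : R).

Definition clamp (x : R) : R := if x < lo then lo else if hi < x then hi else x.

Lemma clamp_itv x : lo <= hi -> lo <= clamp x <= hi.
Proof. by rewrite /clamp; case: ltP; case: ltP => *; apply/andP; split; lra. Qed.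

Lemma subr_clamp_neq0 x : x < lo \/ hi < x -> x - clamp x != 0.
Proof. by rewrite /clamp subr_eq0; case: ltP; case: ltP => *; apply/eqP; lra. Qed.

Lemma norm_subr_clamp_le x eps : 0 <= eps -> lo - eps < x < hi + eps ->
  `|x - clamp x| <= eps.
Proof.
move=> eps0 /andP[xlo xhi]; rewrite ler_norml /clamp.
by case: ltP; case: ltP => *; apply/andP; split; lra.
Qed.

Lemma clamp_sqr_bound d x r : lo <= hi -> 0 <= d ->
  2 * (d * (x - clamp x)) * r - d * r ^+ 2 <= d * (x - clamp x) * (x - lo).
Proof.
move=> lohi d0.
suff : 0 <= d * ((x - clamp x - r) ^+ 2 + (x - clamp x) * (clamp x - lo)) by nra.
apply: mulr_ge0 => //; apply: addr_ge0; first exact: sqr_ge0.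
by rewrite /clamp; case: ltP; case: ltP => *; nra.
Qed.

Lemma deadzone_mvt (g : R -> R) x : lo <= hi ->
  (forall z, derivable g z 1) -> (forall z, lo <= z <= hi -> g z = 0) ->
  exists2 eta, eta < lo \/ hi < eta & g x = derive1 g eta * (x - clamp x).
Proof.
move=> lohi dg g0.
have mvt a b : a < b -> exists2 c, a < c < b & g b - g a = derive1 g c * (b - a).
  move=> ab; have [||c] := @MVT R g (derive1 g) a b ab.
  - by move=> z _; rewrite derive1E; exact: derivableP.
  - apply: continuous_subspaceT => z.
    exact/differentiable_continuous/derivable1_diffP.
  - by rewrite in_itv; exists c.
have glo : g lo = 0 by apply: g0; rewrite lexx lohi.
have ghi : g hi = 0 by apply: g0; rewrite lexx lohi.
rewrite /clamp; case: ltP => [xlo|lox].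
  have [c /andP[xc clo] h] := mvt _ _ xlo.
  by exists c; [left | move: h; rewrite glo; lra].
case: ltP => [hix|xhi].
  have [c /andP[hic cx] h] := mvt _ _ hix.
  by exists c; [right | move: h; rewrite ghi; lra].
exists (hi + 1); first by right; lra.
by rewrite subrr mulr0 g0 // lox xhi.
Qed.
End DeadZone.

Section Continuity.
Context {R : realType} {n : nat} {T : topologicalType}.

Lemma continuous_bilinear (A : 'M[R]_n) (a b : T -> 'cV[R]_n) :
  (forall i, continuous (fun x => a x i ord0)) ->
  (forall i, continuous (fun x => b x i ord0)) ->
  continuous (fun x => ((a x)^T *m A *m b x) ord0 ord0).
Proof.
move=> ca cb; under eq_fun do rewrite quad_sum.
apply: continuous_big => [|i _]; first exact: add_continuous.
apply: continuous_big => [|j _]; first exact: add_continuous.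
move=> x; apply: cvgM; [apply: cvgM | exact: cb]; [exact: ca | exact: cvg_cst].
Qed.

Lemma continuous_dot (a b : T -> 'cV[R]_n) :
  (forall i, continuous (fun x => a x i ord0)) ->
  (forall i, continuous (fun x => b x i ord0)) ->
  continuous (fun x => ((a x)^T *m b x) ord0 ord0).
Proof.
move=> ca cb; under eq_fun do rewrite -[(a _)^T]mulmx1.
exact: continuous_bilinear.
Qed.
End Continuity.

Definition rV_box {R : realType} {n : nat} (a b : 'I_n -> R) : set 'rV[R]_n :=
  [set r | forall j, a j <= r ord0 j <= b j].

Lemma continuous_box_min_gt0 {R : realType} {n : nat} (f : 'rV[R]_n -> R)
    (a b : 'I_n -> R) :
  continuous f -> (forall r, rV_box a b r -> 0 < f r) ->
  exists2 m, 0 < m & forall r, rV_box a b r -> m <= f r.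
Proof.
move=> cf fpos; have [[r0 box_r0]|box0] := pselect (rV_box a b !=set0); last first.
  by exists 1 => // r br; case: box0; exists r.
have cbox : compact (rV_box a b).
  exact: (@rV_compact R n (fun j => `[a j, b j]%classic)
           (fun j => @segment_compact _ (a j) (b j))).
have [c boxc cmin] :=
  compact_EVT_min (ex_intro _ r0 box_r0) cbox (continuous_subspaceT cf).
rewrite inE in boxc.
by exists (f c) => [|r br]; [exact: fpos | apply: cmin; rewrite inE].
Qed.

Section DistanceToSv.
Context {R : realType} {n : nat}.
Implicit Types (w : 'cV[R]_n) (vlo vhi : 'I_n -> R).

Lemma enorm_ge0 w : 0 <= enorm w.
Proof. exact: sqrtr_ge0. Qed.

Lemma enorm_le_sum_norm w : enorm w <= \sum_i `|w i ord0|.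
Proof.
have s0 : 0 <= \sum_i `|w i ord0| by apply: sumr_ge0.
rewrite -(ger0_norm s0) -sqrtr_sqr; apply: ler_wsqrtr.
rewrite expr2 mulr_suml; apply: ler_sum => i _.
rewrite -real_normK ?num_real // expr2; apply: ler_wpM2l => //.
by rewrite (bigD1 i) //= lerDl; apply: sumr_ge0.
Qed.

Lemma dist_Sv_le_sum_clamp vlo vhi w : (forall i, vlo i <= vhi i) ->
  0 <= dist_Sv vlo vhi w <= \sum_i `|w i ord0 - clamp (vlo i) (vhi i) (w i ord0)|.
Proof.
move=> lohi; pose q := \col_i clamp (vlo i) (vhi i) (w i ord0).
have Sq : Sv vlo vhi q by move=> i; rewrite mxE; exact: clamp_itv.
have lb0 : lbound [set enorm (w - x) | x in Sv vlo vhi] 0.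
  by move=> _ [x _ <-]; exact: enorm_ge0.
apply/andP; split; first by apply: lb_le_inf => //; exists (enorm (w - q)), q.
apply: le_trans (ge_inf (ex_intro _ 0 lb0) (ex_intro2 _ _ q Sq erefl)) _.
apply: le_trans (enorm_le_sum_norm _) _.
by apply: ler_sum => i _; rewrite !mxE.
Qed.
End DistanceToSv.

Section VoltageControl.
Context {R : realType} {n : nat}.
Variables (X : 'M[R]_n) (dT : R) (vlo vhi : 'I_n -> R) (g : 'I_n -> R -> R).
Hypothesis posdefX : posdef X.
Hypothesis dT_gt0 : 0 < dT.
Hypothesis vlo_le_vhi : forall i, vlo i <= vhi i.
Hypothesis g_C1 : forall i, C1 (g i).
Hypothesis g_deadzone : forall i x, vlo i <= x <= vhi i -> g i x = 0.
Hypothesis jacobian_bounds : forall v : 'cV[R]_n,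
  (forall i, v i ord0 < vlo i \/ vhi i < v i ord0) ->
  loewner_lt (- (2 / dT) *: invmx X) (dudv g v) /\ loewner_lt (dudv g v) 0.

Implicit Types v : 'cV[R]_n.

Let g_mvt i x := deadzone_mvt (vlo i) (vhi i) (g i) x (vlo_le_vhi i) (g_C1 i).1
  (g_deadzone i).

Definition gvec (v : 'cV[R]_n) : 'cV[R]_n := \col_i g i (v i ord0).

Definition vlo_vec : 'cV[R]_n := \col_i vlo i.

Definition lyap (v : 'cV[R]_n) : R :=
  ((v - vlo_vec)^T *m invmx X *m (v - vlo_vec)) ord0 ord0.

Definition lyap_decr (v : 'cV[R]_n) : R :=
  2 * dT * ((gvec v)^T *m (v - vlo_vec)) ord0 ord0
  - dT ^+ 2 * ((gvec v)^T *m X *m gvec v) ord0 ord0.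

Lemma ctrlE v : ctrl g v = - gvec v.
Proof. by apply/matrixP => i j; rewrite !mxE. Qed.

Lemma lyap_step v : lyap (v + dT *: (X *m ctrl g v)) = lyap v - lyap_decr v.
Proof.
rewrite /lyap ctrlE mulmxN scalerN addrAC quad_invmx_sub // /lyap_decr.
by ring.
Qed.

Lemma lyap_ge0 v : 0 <= lyap v.
Proof. exact/posdef_quad_ge0/posdef_invmx. Qed.

Lemma derive_gt0_outside i z : z < vlo i \/ vhi i < z -> 0 < (derive1 (g i)) z.
Proof.
move=> zout; pose eta : 'cV[R]_n := \col_j (if j == i then z else vhi j + 1).
have eta_out j : eta j ord0 < vlo j \/ vhi j < eta j ord0.
  by rewrite mxE; case: eqP => [->//|_]; right; lra.
have := posdef_diag_gt0 i (jacobian_bounds _ eta_out).2.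
by rewrite /dudv sub0r opprK !mxE eqxx mulr1n.
Qed.

Lemma g_neq0_outside i x : x < vlo i \/ vhi i < x -> g i x != 0.
Proof.
move=> xout; have [eta eta_out ->] := g_mvt i x.
by rewrite mulf_neq0 ?subr_clamp_neq0 // gt_eqF // derive_gt0_outside.
Qed.

Lemma lyap_decr_ge_posdef_quad v : exists2 A, posdef A &
  2 * dT * (((dT / 2) *: (X *m gvec v))^T *m A *m ((dT / 2) *: (X *m gvec v)))
             ord0 ord0 <= lyap_decr v.
Proof.
have mvt i : exists e, (e < vlo i \/ vhi i < e) /\
    g i (v i ord0) = derive1 (g i) e * (v i ord0 - clamp (vlo i) (vhi i) (v i ord0)).
  by have [e ? ?] := g_mvt i (v i ord0); exists e.
have [eta heta] := choice mvt.
pose etav : 'cV[R]_n := \col_i eta i.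
exists ((2 / dT) *: invmx X - diag_mx (\row_i derive1 (g i) (eta i))).
  have -> : \row_i derive1 (g i) (eta i) = \row_i derive1 (g i) (etav i ord0).
    by apply/rowP => i; rewrite !mxE.
  have -> : (2 / dT) *: invmx X - diag_mx (\row_i derive1 (g i) (etav i ord0)) =
            dudv g etav - - (2 / dT) *: invmx X.
    by rewrite /dudv scaleNr opprK addrC.
  by apply: (jacobian_bounds _ _).1 => i; rewrite mxE; exact: (heta i).1.
apply: quad_gap_le_decrement => // i r; rewrite !mxE (heta i).2.
exact/clamp_sqr_bound/ltW/derive_gt0_outside/(heta i).1.
Qed.

Lemma lyap_decr_ge0 v : 0 <= lyap_decr v.
Proof.
have [A posA le_decr] := lyap_decr_ge_posdef_quad v; apply: le_trans le_decr.
by apply: mulr_ge0; [have := dT_gt0; lra | exact: posdef_quad_ge0].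
Qed.

Lemma lyap_decr_gt0 v : (exists i, v i ord0 < vlo i \/ vhi i < v i ord0) ->
  0 < lyap_decr v.
Proof.
move=> [i iout]; have [A posA le_decr] := lyap_decr_ge_posdef_quad v.
apply: lt_le_trans le_decr; apply: mulr_gt0; first by have := dT_gt0; lra.
apply: posA.2; rewrite scaler_eq0 negb_or mulf_neq0 ?invr_eq0 ?gt_eqF //=.
apply: contra_neq (g_neq0_outside _ _ iout) => XG0.
have : gvec v = 0.
  by rewrite -[gvec v]mul1mx -(mulVmx (posdef_unitmx posdefX)) -mulmxA XG0 mulmx0.
by move/matrixP/(_ i ord0); rewrite !mxE.
Qed.

Lemma g_continuous i : continuous (g i).
Proof. by move=> x; apply/differentiable_continuous/derivable1_diffP/(g_C1 i).1. Qed.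

Lemma lyap_decr_continuous_comp {T : topologicalType} (a : T -> 'cV[R]_n) :
  (forall i, continuous (fun x => a x i ord0)) ->
  continuous (fun x => lyap_decr (a x)).
Proof.
move=> ca.
have gvec_cont i : continuous (fun x => gvec (a x) i ord0).
  under eq_fun do rewrite mxE.
  by move=> x; apply: continuous_comp; [exact: ca | exact: g_continuous].
have shift_cont i : continuous (fun x => (a x - vlo_vec) i ord0).
  under eq_fun do rewrite !mxE.
  by move=> x; apply: cvgB; [exact: ca | exact: cvg_cst].
move=> x; apply: cvgB; apply: cvgM; try exact: cvg_cst.
  exact: (continuous_dot _ _ gvec_cont shift_cont).
exact: (continuous_bilinear X _ _ gvec_cont gvec_cont).
Qed.

Lemma lyap_decr_row_continuous : continuous (fun r : 'rV[R]_n => lyap_decr r^T).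
Proof.
apply: lyap_decr_continuous_comp => i.
have -> : (fun r : 'rV[R]_n => r^T i ord0) = fun r => r ord0 i.
  by apply/funext => r; rewrite mxE.
exact: coord_continuous.
Qed.

Section Trajectory.
Variable v : nat -> 'cV[R]_n.
Hypothesis v_step : forall t, v t.+1 = v t + dT *: (X *m ctrl g (v t)).

Lemma lyap_traj_nonincreasing : nonincreasing_seq (fun t => lyap (v t)).
Proof.
apply/nonincreasing_seqP => t; rewrite v_step lyap_step lerBlDr lerDl.
exact: lyap_decr_ge0.
Qed.

Lemma lyap_decr_traj_cvg0 : (fun t => lyap_decr (v t)) @ \oo --> 0.
Proof.
have /cvg_ex [l lyap_cvg] : cvgn (fun t => lyap (v t)).
  apply: nonincreasing_is_cvgn; first exact: lyap_traj_nonincreasing.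
  by exists 0 => _ [t _ <-]; exact: lyap_ge0.
have -> : (fun t => lyap_decr (v t)) = fun t => lyap (v t) - lyap (v t.+1).
  by apply/funext => t; rewrite v_step lyap_step subKr.
rewrite -(subrr l); apply: cvgB => //.
by rewrite (cvg_shiftS (fun t => lyap (v t))).
Qed.

Lemma traj_coord_bound t i :
  `|v t i ord0 - vlo i| <= Num.sqrt (X i i * lyap (v 0)).
Proof.
rewrite -sqrtr_sqr; apply: ler_wsqrtr.
have := sqr_coord_le_quad_invmx (v t - vlo_vec) i posdefX.
have -> : (v t - vlo_vec) i ord0 = v t i ord0 - vlo i by rewrite !mxE.
move/le_trans; apply; apply: ler_wpM2l; first exact/ltW/posdef_diag_gt0.
exact: lyap_traj_nonincreasing.
Qed.

Lemma traj_eventually_avoids_box (a b : 'I_n -> R) :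
  (forall r, rV_box a b r -> exists i, r ord0 i < vlo i \/ vhi i < r ord0 i) ->
  \forall t \near \oo, ~ rV_box a b (v t)^T.
Proof.
move=> box_out.
have [m m0 m_le] : exists2 m, 0 < m & forall r, rV_box a b r -> m <= lyap_decr r^T.
  apply: continuous_box_min_gt0; first exact: lyap_decr_row_continuous.
  by move=> r /box_out [i iout]; apply: lyap_decr_gt0; exists i; rewrite mxE.
move/cvgr0Pnorm_lt/(_ m m0): lyap_decr_traj_cvg0; apply: filterS => t.
rewrite ger0_norm ?lyap_decr_ge0 // => decr_lt /m_le; rewrite trmxK.
by rewrite leNgt decr_lt.
Qed.

Lemma traj_eventually_near_Sv eps : 0 < eps ->
  \forall t \near \oo, forall i, vlo i - eps < v t i ord0 < vhi i + eps.
Proof.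
move=> eps0; apply: filter_forall => i.
pose rad j := Num.sqrt (X j j * lyap (v 0)).
pose box c d := rV_box (fun j => if j == i then c else vlo j - rad j)
                       (fun j => if j == i then d else vlo j + rad j).
have traj_in_box t c d : c <= v t i ord0 <= d -> box c d (v t)^T.
  move=> cd j; rewrite !mxE /rad; case: eqP => [->//|_].
  have := traj_coord_bound t j; rewrite ler_norml => /andP[? ?].
  by apply/andP; split; lra.
have avoid c d : vhi i < c \/ d < vlo i -> \forall t \near \oo, ~ box c d (v t)^T.
  move=> cd; apply: traj_eventually_avoids_box => r /(_ i).
  by rewrite !eqxx => /andP[? ?]; exists i; case: cd => ?; [right | left]; lra.
have low : \forall t \near \oo, ~ box (vlo i - rad i) (vlo i - eps) (v t)^T.
  by apply: avoid; right; lra.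
have high : \forall t \near \oo, ~ box (vhi i + eps) (vlo i + rad i) (v t)^T.
  by apply: avoid; left; lra.
near=> t; have := traj_coord_bound t i; rewrite ler_norml -/(rad i) => /andP[? ?].
apply/andP; split; rewrite ltNge; apply/negP => out.
  by apply: (near low t) => //; apply: traj_in_box; apply/andP; split; lra.
by apply: (near high t) => //; apply: traj_in_box; apply/andP; split; lra.
Unshelve. all: by end_near.
Qed.

Lemma dist_Sv_traj_cvg0 : (fun t => dist_Sv vlo vhi (v t)) @ \oo --> 0.
Proof.
apply/cvgr0Pnorm_lt => e e0.
have eps0 : 0 < e / n.+1%:R by rewrite divr_gt0.
apply: filterS (traj_eventually_near_Sv _ eps0) => t near_t.
have /andP[dist_ge0 dist_le] := dist_Sv_le_sum_clamp vlo vhi (v t) vlo_le_vhi.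
rewrite ger0_norm //; apply: le_lt_trans dist_le _.
apply: (@le_lt_trans _ _ (\sum_(i < n) e / n.+1%:R)).
  by apply: ler_sum => i _; apply: norm_subr_clamp_le; [exact: ltW | exact: near_t].
rewrite sumr_const card_ord -[_ *+ n]mulr_natr mulrAC -mulrA gtr_pMr //.
by rewrite ltr_pdivrMr ?ltr0n // mul1r ltr_nat.
Qed.
End Trajectory.
End VoltageControl.

Theorem theorem1 (R : realType) (n : nat) (X : 'M[R]_n) (dT : R)
  (vlo vhi : 'I_n -> R) (g : 'I_n -> R -> R) :
  (0 < n)%N ->
  posdef X ->
  0 < dT ->
  (forall i, vlo i <= vhi i) ->
  (forall i, C1 (g i)) ->
  (forall i x, vlo i <= x <= vhi i -> g i x = 0) ->
  (forall v : 'cV[R]_n,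
     (forall i, v i ord0 < vlo i \/ vhi i < v i ord0) ->
     loewner_lt (- (2 / dT) *: invmx X) (dudv g v) /\
     loewner_lt (dudv g v) 0) ->
  (forall i, (fun x => `|g i x|) @ +oo --> +oo /\
             (fun x => `|g i x|) @ -oo --> +oo) ->
  forall v : nat -> 'cV[R]_n,
    (forall t : nat, v t.+1 = v t + dT *: (X *m ctrl g (v t))) ->
    (fun t => dist_Sv vlo vhi (v t)) @ \oo --> 0.
Proof.
move=> _ posdefX dT_gt0 vlo_le_vhi g_C1 g_deadzone jacobian_bounds _ v v_step.
exact: (dist_Sv_traj_cvg0 X dT vlo vhi g posdefX dT_gt0 vlo_le_vhi g_C1 g_deadzone
          jacobian_bounds v v_step).
Qed.
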